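(* Let $L>0$ be even and $A=\{x\in\{0,1\}^L: x_1+\dots+x_L=L/2\}$. Let $g:A\to A$ be an arbitrary function. Then there exist $m>0$ and a Boolean network with inputs $B$, with designated input variables $a=(a_1,\dots,a_L)$, $d=(d_1,d_2)$ and designated output variables $c=(c_1,\dots,c_L)$, such that for every time $t$, every input sequence, and every initial condition of $B$, whenever $a(t)\in A$ we have $c(t+m)=a(t)$ if $d(t)=(0,1)$, and $c(t+m)=g(a(t))$ if $d(t)=(1,0)$. Moreover $B$ is cooperative, every node of its digraph has indegree and outdegree at most $2$, every input variable has indegree $0$ and every output variable has outdegree $0$.
   Context: A Boolean network with inputs consists of finitely many Boolean variables, some designated as input variables whose values at each time are prescribed externally (arbitrarily), and the remaining (internal) variables, each updated simultaneously at each discrete time step by $x(t)=f_x(\text{values of all variables at time } t-1)$ for a Boolean function $f_x$; output variables are designated internal variables. It is cooperative if every update function $f_x$ is monotone nondecreasing with respect to the componentwise order (equivalently, expressible using only $\wedge$ and $\vee$). Its digraph has an arc from variable $y$ to internal variable $x$ iff $f_x$ actually depends on $y$ (flipping $y$ from $0$ to $1$ with all else fixed can raise $f_x$ from $0$ to $1$). *)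

From mathcomp Require Import all_boot.
Set Implicit Arguments. Unset Strict Implicit. Unset Printing Implicit Defensive.

(* Input variables: inl i = a_(i+1) (i : 'I_L), inr j = d_(j+1) (j : 'I_2).
   Internal variables: 'I_n.  All variables: (input + internal). *)
Definition inVar (L : nat) := ('I_L + 'I_2)%type.
Definition var (L n : nat) := (inVar L + 'I_n)%type.

Definition inA (L : nat) (x : {ffun 'I_L -> bool}) : bool :=
  (\sum_(i < L) (x i : nat)) == L./2.

Definition network (L n : nat) := 'I_n -> ({ffun var L n -> bool} -> bool).

Definition leB (V : finType) (s s' : {ffun V -> bool}) : Prop :=
  forall v, s v ==> s' v.

Definition cooperative L n (f : network L n) : Prop :=
  forall i s s', leB s s' -> f i s ==> f i s'.

Definition depends (V : finType) (F : {ffun V -> bool} -> bool) (y : V) : bool :=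
  [exists s : {ffun V -> bool},
     [&& ~~ s y, ~~ F s & F [ffun v => if v == y then true else s v]]].

Definition arc L n (f : network L n) (y : var L n) (x : 'I_n) : bool :=
  depends (f x) y.

Definition indeg L n (f : network L n) (v : var L n) : nat :=
  match v with
  | inl _ => 0
  | inr x => #|[set y | arc f y x]|
  end.

Definition outdeg L n (f : network L n) (y : var L n) : nat :=
  #|[set x | arc f y x]|.

Definition stateAt L n (u : nat -> inVar L -> bool) (x : nat -> 'I_n -> bool) (t : nat)
  : {ffun var L n -> bool} :=
  [ffun v => match v with inl j => u t j | inr k => x t k end].

Definition trajectory L n (f : network L n) (u : nat -> inVar L -> bool)
  (x : nat -> 'I_n -> bool) : Prop :=
  forall t i, x t.+1 i = f i (stateAt u x t).

Definition a_at L (u : nat -> inVar L -> bool) (t : nat) : {ffun 'I_L -> bool} :=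
  [ffun i => u t (inl i)].

Definition d_at L (u : nat -> inVar L -> bool) (t : nat) : bool * bool :=
  (u t (inr ord0), u t (inr (@Ordinal 2 1 isT))).

Definition c_at L n (c : 'I_L -> 'I_n) (x : nat -> 'I_n -> bool) (t : nat)
  : {ffun 'I_L -> bool} :=
  [ffun i => x t (c i)].

From Pilot Require Import Defs.
From mathcomp Require Import all_boot zify.
Set Implicit Arguments. Unset Strict Implicit. Unset Printing Implicit Defensive.

(* Let Z be the set of input patterns whose data part a lies in A and whose
   control part d is (0,1) or (1,0).  Z is an antichain for the componentwise order (two
   balanced vectors one below the other are equal), so the required output
   c_i = (d = (0,1) ? a_i : g(a)_i) on Z is the restriction of the monotone DNF
   "exists a pattern z in Z with label_i z and z <= current input".  It therefore suffices
   to realise an arbitrary family of monotone DNFs by a cooperative network of bounded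
   degree with a fixed delay. *)

Lemma depends_only (V : finType) (F : {ffun V -> bool} -> bool) (Q : pred V) (y : V) :
  (forall s s' : {ffun V -> bool}, (forall z, Q z -> s z = s' z) -> F s = F s') ->
  depends F y -> Q y.
Proof.
move=> HF /existsP [s /and3P [sy Fs Fs']].
apply/negPn/negP => Qy; move: Fs; rewrite (HF s [ffun v => if v == y then true else s v]) ?Fs' //.
move=> z Qz; rewrite ffunE; case: eqP => // zy; subst z; by rewrite Qz in Qy.
Qed.

(* Gates of a layered circuit; the arguments of And and Or are positions in the
   previous layer. *)
Inductive gate := Const of bool | And of nat & nat | Or of nat & nat.

Definition gate_reads (G : gate) : seq nat :=
  match G with Const _ => [::] | And p q | Or p q => [:: p; q] end.

Definition gate_eval (G : gate) (r : nat -> bool) : bool :=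
  match G with Const b => b | And p q => r p && r q | Or p q => r p || r q end.

Lemma gate_eval_ext G r r' :
  {in gate_reads G, r =1 r'} -> gate_eval G r = gate_eval G r'.
Proof.
by case: G => [b|p q|p q] //= e; rewrite !e ?inE ?eqxx ?orbT.
Qed.

Lemma gate_eval_mono G r r' :
  (forall p, r p ==> r' p) -> gate_eval G r ==> gate_eval G r'.
Proof.
move=> h; case: G => [b|p q|p q] /=; first exact: implybb.
- by apply/implyP => /andP[/(implyP (h p)) -> /(implyP (h q)) ->].
- by apply/implyP => /orP[/(implyP (h p)) ->|/(implyP (h q)) ->]; rewrite ?orbT.
Qed.

(* A layered network of depth D and width W: internal node (l, w) is variable l * W + w.  The extra variable D * W only makes the index type nonempty. *)
Section Layered.
Variables (L D W : nat).
Variable inputAt : nat -> option (inVar L).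
Variable gateAt : nat -> nat -> gate.

Definition node (l w : nat) : 'I_(D * W).+1 := inord (l * W + w).
Definition layer (x : 'I_(D * W).+1) : nat := x %/ W.
Definition slot (x : 'I_(D * W).+1) : nat := x %% W.

Definition layered : network L (D * W).+1 := fun x s =>
  if D <= layer x then false
  else if layer x is l.+1 then
    gate_eval (gateAt l.+1 (slot x)) (fun p => s (inr (node l p)))
  else if inputAt (slot x) is Some v then s (inl v) else false.

Fixpoint value (l w : nat) (s : inVar L -> bool) : bool :=
  if l is l'.+1 then gate_eval (gateAt l w) (fun p => value l' p s)
  else if inputAt w is Some v then s v else false.

Lemma value0 w s : value 0 w s = if inputAt w is Some v then s v else false.
Proof. by []. Qed.

Lemma valueS l w s : value l.+1 w s = gate_eval (gateAt l.+1 w) (fun p => value l p s).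
Proof. by []. Qed.

Hypothesis W_gt0 : 0 < W.
Hypothesis gate_in_range : forall l w p, w < W -> p \in gate_reads (gateAt l w) -> p < W.

Lemma node_val l w : l < D -> w < W -> node l w = l * W + w :> nat.
Proof. by move=> hl hw; rewrite inordK //; nia. Qed.

Lemma layer_node l w : l < D -> w < W -> layer (node l w) = l.
Proof. by move=> hl hw; rewrite /layer node_val // divnMDl ?divn_small ?addn0 //; lia. Qed.

Lemma slot_node l w : l < D -> w < W -> slot (node l w) = w.
Proof. by move=> hl hw; rewrite /slot node_val // modnMDl modn_small. Qed.

Lemma node_layer_slot (x : 'I_(D * W).+1) : x = node (layer x) (slot x).
Proof. by apply: val_inj; rewrite /node /layer /slot -divn_eq inord_val. Qed.

Lemma slot_lt (x : 'I_(D * W).+1) : slot x < W.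
Proof. exact: ltn_pmod. Qed.

Lemma layered_value (u : nat -> inVar L -> bool) (x : nat -> 'I_(D * W).+1 -> bool) :
  trajectory layered u x ->
  forall t l w, l < D -> w < W -> x (t + l.+1) (node l w) = value l w (u t).
Proof.
move=> hx t; elim=> [|l IH] w hl hw; rewrite addnS hx /layered layer_node // slot_node //.
  by rewrite leqNgt hl value0 /=; case: (inputAt w) => [v|] //; rewrite ffunE addn0.
rewrite leqNgt hl valueS /=; apply: gate_eval_ext => p /(gate_in_range hw) hp.
by rewrite ffunE IH // ltnW.
Qed.

Lemma layered_cooperative : cooperative layered.
Proof.
move=> x s s' hs; rewrite /layered; case: ifP => // _.
case: (layer x) => [|l]; last exact: gate_eval_mono.
by case: (inputAt _) => [v|] //.
Qed.

Definition node_reads (x : 'I_(D * W).+1) : seq (var L (D * W).+1) :=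
  if D <= layer x then [::]
  else if layer x is l.+1 then [seq inr (node l p) | p <- gate_reads (gateAt l.+1 (slot x))]
  else if inputAt (slot x) is Some v then [:: inl v] else [::].

Lemma arc_node_reads y x : Defs.arc layered y x -> y \in node_reads x.
Proof.
apply: (@depends_only _ _ [pred z | z \in node_reads x]) => s s'; rewrite /layered /node_reads.
case: ifP => // _; case: (layer x) => [|l] e.
  by case: (inputAt _) e => [v|] // e; apply: e; rewrite /= mem_head.
by apply: gate_eval_ext => p hp; rewrite e //= map_f.
Qed.

Lemma size_node_reads x : size (node_reads x) <= 2.
Proof.
rewrite /node_reads; case: ifP => // _; case: (layer x) => [|l].
  by case: (inputAt _).
by rewrite size_map; case: (gateAt _ _).
Qed.

Lemma layered_indeg v : indeg layered v <= 2.
Proof.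
case: v => [//|x] /=; apply: leq_trans (size_node_reads x).
apply: leq_trans (card_size (node_reads x)); apply: subset_leq_card.
by apply/subsetP => y; rewrite inE => /arc_node_reads.
Qed.

Lemma input_reader v x : inl v \in node_reads x ->
  layer x = 0 /\ inputAt (slot x) = Some v.
Proof.
rewrite /node_reads; case: ifP => // _; case: (layer x) => [|l].
  by case: (inputAt _) => [v'|] //; rewrite inE => /eqP [->].
by case/mapP.
Qed.

Lemma node_reader z x : inr z \in node_reads x ->
  [/\ layer x = (layer z).+1, layer x < D & slot z \in gate_reads (gateAt (layer x) (slot x))].
Proof.
rewrite /node_reads; case: ifPn => // hD; case E: (layer x) => [|l].
  by case: (inputAt _).
move=> /mapP [p hp ez]; case: ez => ->; rewrite -ltnNge E in hD.
have hpW : p < W := gate_in_range (slot_lt x) hp.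
by rewrite layer_node ?slot_node // (ltn_trans _ hD).
Qed.

Lemma card_le2 (T : finType) (P : pred T) (a b : T) :
  (forall y, P y -> y = a \/ y = b) -> #|[set y | P y]| <= 2.
Proof.
move=> H; apply: leq_trans (_ : #|[set a; b]| <= 2); last by rewrite cards2; case: (a != b).
apply: subset_leq_card; apply/subsetP => y; rewrite inE => /H [->|->];
  by rewrite !inE eqxx ?orbT.
Qed.

Hypothesis input_unique : forall v, exists a, forall w, inputAt w = Some v -> w = a.
Hypothesis fanout2 : forall l p, exists a b, forall w,
  w < W -> p \in gate_reads (gateAt l w) -> w = a \/ w = b.

Lemma layered_outdeg y : outdeg layered y <= 2.
Proof.
rewrite /outdeg; case: y => [v|z].
  have [a ha] := input_unique v.
  apply: (@card_le2 _ _ (node 0 a) (node 0 a)) => x hx.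
  have [l0 hv] := input_reader (arc_node_reads hx).
  by left; rewrite (node_layer_slot x) l0 (ha _ hv).
have [a [b hab]] := fanout2 (layer z).+1 (slot z).
apply: (@card_le2 _ _ (node (layer z).+1 a) (node (layer z).+1 b)).
move=> x hx; have [lx _ hz] := node_reader (arc_node_reads hx).
by rewrite (node_layer_slot x) lx; case: (hab _ (slot_lt x)) => [|->|->]; rewrite -?lx; auto.
Qed.

Lemma layered_sink w : 0 < D -> w < W -> outdeg layered (inr (node D.-1 w)) = 0.
Proof.
move=> hD hw; apply/eqP; rewrite cards_eq0; apply/eqP/setP => x.
rewrite in_set in_set0; apply/negbTE/negP => ha; have [lx hx _] := node_reader (arc_node_reads ha).
by move: hx; rewrite lx layer_node ?prednK ?ltn_predL ?ltnn.
Qed.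

End Layered.

Arguments value {L} inputAt gateAt l w s : simpl never.

Lemma fold_big (R : Type) (idx : R) (op : Monoid.law idx) (h : nat -> nat -> R) (c W e : nat) :
  (forall j w, j < e -> w + c * 2 ^ j < W -> h j.+1 w = op (h j w) (h j (w + c * 2 ^ j))) ->
  forall w, w + c * (2 ^ e).-1 < W -> h e w = \big[op/idx]_(0 <= k < 2 ^ e) h 0 (w + k * c).
Proof.
move=> step; suff: forall j, j <= e -> forall w, w + c * (2 ^ j).-1 < W ->
    h j w = \big[op/idx]_(0 <= k < 2 ^ j) h 0 (w + k * c) by apply.
elim=> [|j IH] hj w hw; first by rewrite expn0 big_nat1 mul0n addn0.
have pos := expn_gt0 2 j; rewrite expnS in hw *.
rewrite step ?IH ?(ltnW hj) //; try nia.
rewrite [RHS](@big_cat_nat _ _ _ (2 ^ j)) //=; last lia.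
congr (op _ _); rewrite -[in RHS](add0n (2 ^ j)) big_addn !add0n.
rewrite (_ : 2 * 2 ^ j - 2 ^ j = 2 ^ j); last lia.
by apply: eq_bigr => k _; congr (h 0 _); nia.
Qed.

(* A circuit for the monotone DNFs  out_i(s) = [exists A, term i A && A <= s].
   Inputs are numbered 0 .. nvars - 1 and sets of inputs 0 .. 2^nvars - 1 (setOf).  In the
   middle layers, position k * 2^tbits + T holds literal k of the term slot
   T = S * 2^L + i, which stands for the candidate term (i, setOf S).  The layers are
   - 0 : input k at position k;
   - 1 .. tbits : duplication, w reads w / 2, so that position k * 2^tbits + T gets input k;
   - tbits + 1 : literal k is kept if input k belongs to setOf S, otherwise replaced by true;
   - nvars AND-folds over k : position T then tells whether setOf S <= s;
   - one layer keeping term slot T iff term i (setOf S), otherwise false;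
   - nvars OR-folds over S : position i then holds out_i. *)
Section DNFCircuit.
Variables (L : nat) (term : 'I_L -> {set inVar L} -> bool).

Definition nvars : nat := #|{: inVar L}|.
Definition inputOf (k : nat) : option (inVar L) := nth None [seq Some v | v <- enum {: inVar L}] k.
Definition setOf (S : nat) : {set inVar L} := nth set0 (enum {: {set inVar L}}) S.

Definition tbits : nat := nvars + L.
Definition width : nat := 2 ^ tbits * 2 ^ nvars.
Definition depth : nat := tbits + nvars + nvars + 3.

Definition mask_gate (keep dflt : bool) (w : nat) : gate := if keep then And w w else Const dflt.

Definition fold_gate (conj : bool) (H w : nat) : gate :=
  if w + H < width then (if conj then And else Or) w (w + H) else Const conj.

Definition stride (l : nat) : nat :=
  if l <= tbits + nvars + 1 then 2 ^ tbits * 2 ^ (l - tbits.+2)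
  else 2 ^ L * 2 ^ (l - (tbits + nvars + 3)).

Definition keep_literal (w : nat) : bool :=
  if inputOf (w %/ 2 ^ tbits) is Some v then v \in setOf (w %% 2 ^ tbits %/ 2 ^ L) else false.

Definition keep_term (w : nat) : bool :=
  if insub (w %% 2 ^ L) is Some i then term i (setOf (w %/ 2 ^ L)) else false.

Definition dnf_gate (l w : nat) : gate :=
  if l <= tbits then And w./2 w./2
  else if l == tbits.+1 then mask_gate (keep_literal w) true w
  else if l <= tbits + nvars + 1 then fold_gate true (stride l) w
  else if l == tbits + nvars + 2 then mask_gate (keep_term w) false w
  else fold_gate false (stride l) w.

Lemma gate_dup l w : l <= tbits -> dnf_gate l w = And w./2 w./2.
Proof. by rewrite /dnf_gate => ->. Qed.

Lemma gate_literal w : dnf_gate tbits.+1 w = mask_gate (keep_literal w) true w.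
Proof. by rewrite /dnf_gate ltnn eqxx. Qed.

Lemma gate_and j w : j < nvars ->
  dnf_gate (tbits.+1 + j).+1 w = fold_gate true (2 ^ tbits * 2 ^ j) w.
Proof.
move=> hj; rewrite /dnf_gate /stride; repeat (case: ifP => ?; try lia).
by congr (fold_gate _ (_ * 2 ^ _) _); lia.
Qed.

Lemma gate_term w : dnf_gate (tbits.+1 + nvars).+1 w = mask_gate (keep_term w) false w.
Proof. by rewrite /dnf_gate; repeat (case: ifP => ?; try lia). Qed.

Lemma gate_or j w : dnf_gate ((tbits.+1 + nvars).+1 + j).+1 w = fold_gate false (2 ^ L * 2 ^ j) w.
Proof.
rewrite /dnf_gate /stride; repeat (case: ifP => ?; try lia).
by congr (fold_gate _ (_ * 2 ^ _) _); lia.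
Qed.

Lemma window_lt c b w : w < c -> 0 < b -> w + c * b.-1 < c * b.
Proof. by move=> hw; case: b => // b _; rewrite mulnS /=; lia. Qed.

Lemma ltn_L (i : 'I_L) : i < 2 ^ L.
Proof. exact: ltn_trans (ltn_ord i) (ltn_expl L (ltnSn 1)). Qed.

Lemma nvars_lt : nvars < 2 ^ nvars.
Proof. exact: ltn_expl. Qed.

Lemma inputOf_index v : inputOf (index v (enum {: inVar L})) = Some v.
Proof.
rewrite /inputOf (nth_map v) ?nth_index ?mem_enum // index_mem mem_enum //.
Qed.

Lemma inputOf_Some k v : inputOf k = Some v -> k = index v (enum {: inVar L}).
Proof.
rewrite /inputOf; case: (ltnP k (size (enum {: inVar L}))) => hk.
  by rewrite (nth_map v) // => -[<-]; rewrite index_uniq ?enum_uniq.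
by rewrite nth_default // size_map.
Qed.

Lemma big_and_inputs (P : inVar L -> bool) :
  \big[andb/true]_(0 <= k < 2 ^ nvars) (if inputOf k is Some v then P v else true) =
  [forall v, P v].
Proof.
rewrite big_all; apply/allP/forallP => [H v|H k _].
  have := H (index v (enum {: inVar L})); rewrite inputOf_index; apply.
  rewrite mem_index_iota /= (leq_trans _ (ltnW nvars_lt)) // /nvars cardE index_mem mem_enum //.
by case: (inputOf k).
Qed.

Lemma card_sets : #|{: {set inVar L}}| = 2 ^ nvars.
Proof. by rewrite -cardsT -powersetT card_powerset cardsT. Qed.

Lemma big_or_sets (P : {set inVar L} -> bool) :
  \big[orb/false]_(0 <= S < 2 ^ nvars) P (setOf S) = [exists A, P A].
Proof.
rewrite big_has; apply/hasP/existsP => [[S _ hS]|[A hA]]; first by exists (setOf S).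
exists (index A (enum {: {set inVar L}})); last by rewrite /setOf nth_index ?mem_enum.
by rewrite mem_index_iota /= -card_sets cardE index_mem mem_enum.
Qed.

Section Semantics.
Variable s : inVar L -> bool.
Local Notation val l w := (value inputOf dnf_gate l w s).

Lemma val_dup j w : j <= tbits -> val j w = val 0 (w %/ 2 ^ j).
Proof.
elim: j w => [|j IH] w hj; first by rewrite expn0 divn1.
by rewrite valueS gate_dup //= andbb IH ?(ltnW hj) // -divn2 -divnMA -expnS.
Qed.

Lemma val_literal k T : T < 2 ^ tbits ->
  val tbits.+1 (k * 2 ^ tbits + T) =
  if inputOf k is Some v then (v \in setOf (T %/ 2 ^ L)) ==> s v else true.
Proof.
move=> hT; rewrite valueS gate_literal /mask_gate /keep_literal.
rewrite divnMDl ?expn_gt0 // divn_small // addn0 modnMDl modn_small //.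
case E: (inputOf k) => [v|//]; case: (v \in _) => //=.
by rewrite andbb val_dup // divnMDl ?expn_gt0 // divn_small // addn0 value0 E.
Qed.

Lemma val_clause T : T < 2 ^ tbits ->
  val (tbits.+1 + nvars) T = [forall v in setOf (T %/ 2 ^ L), s v].
Proof.
move=> hT; rewrite (@fold_big _ true andb (fun j w => val (tbits.+1 + j) w) (2 ^ tbits) width).
- rewrite -big_and_inputs; apply: eq_bigr => k _.
  by rewrite addn0 [T + _]addnC val_literal.
- move=> j w hj hw; rewrite addnS valueS gate_and // /fold_gate hw //.
- by rewrite /width window_lt ?expn_gt0.
Qed.

Lemma val_term (i : 'I_L) S : S < 2 ^ nvars ->
  val (tbits.+1 + nvars).+1 (S * 2 ^ L + i) = term i (setOf S) && [forall v in setOf S, s v].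
Proof.
move=> hS; have hi := ltn_L i.
have hw : S * 2 ^ L + i < 2 ^ tbits.
  by rewrite /tbits expnD; have := expn_gt0 2 L; nia.
rewrite valueS gate_term /mask_gate /keep_term modnMDl modn_small // valK.
rewrite divnMDl ?expn_gt0 // divn_small // addn0.
by case: (term i _) => //=; rewrite andbb val_clause // divnMDl ?expn_gt0 // divn_small // addn0.
Qed.

Lemma val_output (i : 'I_L) :
  val depth.-1 i = [exists A, term i A && [forall v in A, s v]].
Proof.
rewrite (_ : depth.-1 = (tbits.+1 + nvars).+1 + nvars); last by rewrite /depth; lia.
rewrite (@fold_big _ false orb (fun j w => val ((tbits.+1 + nvars).+1 + j) w) (2 ^ L) width).
- rewrite -big_or_sets; apply: eq_big_nat => S /andP [_ hS].
  by rewrite addn0 [i + _]addnC val_term.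
- by move=> j w hj hw; rewrite addnS valueS gate_or /fold_gate hw.
- have hb : 0 < 2 ^ nvars by rewrite expn_gt0.
  apply: leq_trans (window_lt (ltn_L i) hb) _.
  by rewrite /width /tbits expnD mulnC leq_pmulr ?muln_gt0 ?expn_gt0.
Qed.

End Semantics.

Lemma mask_reads keep dflt w p : p \in gate_reads (mask_gate keep dflt w) -> p = w.
Proof. by rewrite /mask_gate; case: keep; rewrite //= !inE orbb => /eqP. Qed.

Lemma fold_reads conj H w p : p \in gate_reads (fold_gate conj H w) ->
  p = w \/ p = w + H /\ p < width.
Proof.
rewrite /fold_gate; case: ifP => // hw.
by case: conj; rewrite /= !inE => /orP [] /eqP ->; auto.
Qed.

Lemma dnf_gate_reads l w p : p \in gate_reads (dnf_gate l w) ->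
  if l <= tbits then p = w./2 else p = w \/ p = w + stride l /\ p < width.
Proof.
rewrite /dnf_gate; case: ifP => _; first by rewrite /= !inE orbb => /eqP.
case: ifP => _; first by move/mask_reads; left.
case: ifP => _; first exact: fold_reads.
by case: ifP => _; [move/mask_reads; left | exact: fold_reads].
Qed.

Lemma dnf_gate_in_range l w p : w < width -> p \in gate_reads (dnf_gate l w) -> p < width.
Proof.
move=> hw /dnf_gate_reads; case: ifP => _ => [->|[->|[_ //]]] //.
by apply: leq_ltn_trans hw; rewrite -divn2 leq_div.
Qed.

Lemma dnf_fanout l p : exists a b, forall w,
  w < width -> p \in gate_reads (dnf_gate l w) -> w = a \/ w = b.
Proof.
case: (leqP l tbits) => hl.
  exists p.*2, p.*2.+1 => w _ /dnf_gate_reads; rewrite hl => ->.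
  have := odd_double_half w; case: (odd w) => e; [right | left];
    by rewrite -{1}e ?add1n ?add0n.
exists p, (p - stride l) => w _ /dnf_gate_reads; rewrite leqNgt hl /= => [[->|[-> _]]].
  by left.
by right; rewrite addnK.
Qed.

End DNFCircuit.

Theorem monotone_dnf_network (L : nat) (term : 'I_L -> {set inVar L} -> bool) :
  exists (m n : nat) (f : network L n) (c : 'I_L -> 'I_n),
    0 < m /\ injective c /\
    (forall (u : nat -> inVar L -> bool) (x : nat -> 'I_n -> bool), trajectory f u x ->
       forall t i, x (t + m) (c i) = [exists A, term i A && [forall v in A, u t v]]) /\
    cooperative f /\
    (forall v, indeg f v <= 2 /\ outdeg f v <= 2) /\
    (forall k : 'I_L, outdeg f (inr (c k)) = 0).
Proof.
have W_gt0 : 0 < width L by rewrite muln_gt0 !expn_gt0.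
have out_lt (i : 'I_L) : i < width L.
  apply: leq_trans (ltn_L i) (leq_trans (leq_pexp2l _ (leq_addl (nvars L) L)) _) => //.
  by rewrite leq_pmulr ?expn_gt0.
have depth_gt0 : 0 < depth L by rewrite /depth addn3.
have last_lt : (depth L).-1 < depth L by rewrite ltn_predL.
have range := @dnf_gate_in_range L term.
have inputs (v : inVar L) : exists a, forall w, inputOf L w = Some v -> w = a.
  by exists (index v (enum {: inVar L})) => w /inputOf_Some.
exists (depth L), (depth L * width L).+1, (layered (@inputOf L) (dnf_gate term)),
  (fun i => node (depth L) (width L) (depth L).-1 i).
split; first exact: depth_gt0.
split.
  move=> i j /(congr1 val); rewrite /= !node_val // => /addnI; exact: val_inj.
split.
  move=> u x hx t i; rewrite -[in t + _](prednK depth_gt0).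
  by rewrite (layered_value W_gt0 range hx) ?val_output.
split; first exact: layered_cooperative.
split.
  by move=> v; rewrite layered_indeg (layered_outdeg W_gt0 range inputs (@dnf_fanout L term)).
by move=> k; apply: layered_sink.
Qed.

(* A monotone DNF whose terms form an antichain takes, on each term, the value of that term's
   label: this is how an arbitrary function on an antichain extends to a monotone one. *)
Lemma antichain_extension (V : finType) (Z : pred {set V}) (phi : {set V} -> bool)
    (s : V -> bool) :
  (forall A B, Z A -> Z B -> A \subset B -> A = B) -> Z [set v | s v] ->
  [exists A, (Z A && phi A) && [forall v in A, s v]] = phi [set v | s v].
Proof.
move=> anti ZB; apply/existsP/idP => [[A /andP [/andP [ZA phiA] /forallP sA]]|phiB].
  suff <- : A = [set v | s v] by [].
  by apply: anti => //; apply/subsetP => v /(implyP (sA v)); rewrite inE.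
by exists [set v | s v]; rewrite ZB phiB; apply/forallP => v; rewrite inE implybb.
Qed.

Lemma le_count_eq (I : finType) (a b : I -> bool) :
  (forall j, a j ==> b j) -> \sum_j (a j : nat) = \sum_j (b j : nat) -> a =1 b.
Proof.
move=> ab eqsum j; have le_ab k : a k <= b k by move: (ab k); case: (a k); case: (b k).
have /eqP : \sum_k (b k - a k) = 0 by rewrite sumnB // eqsum subnn.
rewrite sum_nat_eq0 => /forallP /(_ j); rewrite subn_eq0 => hba.
by move: (le_ab j) hba; case: (a j); case: (b j).
Qed.

Section Antichain.
Variable L : nat.

Definition ctrl1 : inVar L := inr ord0.
Definition ctrl2 : inVar L := inr (@Ordinal 2 1 isT).

Definition data_of (A : {set inVar L}) : {ffun 'I_L -> bool} := [ffun j => inl j \in A].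

Definition admissible (A : {set inVar L}) : bool :=
  inA (data_of A) && ((ctrl1 \in A) != (ctrl2 \in A)).

Lemma admissible_antichain A B :
  admissible A -> admissible B -> A \subset B -> A = B.
Proof.
move=> /andP [/eqP balA oneA] /andP [/eqP balB oneB] /subsetP AB.
have data_eq : data_of A =1 data_of B.
  by apply: le_count_eq => [j|]; rewrite ?ffunE ?balA ?balB //; apply/implyP => /AB.
have /andP [/eqP c1 /eqP c2] : ((ctrl1 \in A) == (ctrl1 \in B)) && ((ctrl2 \in A) == (ctrl2 \in B)).
  have i1 : (ctrl1 \in A) ==> (ctrl1 \in B) by apply/implyP/AB.
  have i2 : (ctrl2 \in A) ==> (ctrl2 \in B) by apply/implyP/AB.
  move: oneA oneB i1 i2.
  by case: (ctrl1 \in A); case: (ctrl2 \in A); case: (ctrl1 \in B); case: (ctrl2 \in B).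
apply/setP => -[j|[[|[|k]] hk]]; first by have := data_eq j; rewrite !ffunE.
- by rewrite (_ : inr _ = ctrl1) // /ctrl1; congr inr; exact: val_inj.
- by rewrite (_ : inr _ = ctrl2) // /ctrl2; congr inr; exact: val_inj.
- by [].
Qed.

End Antichain.

Arguments ctrl1 {L}.
Arguments ctrl2 {L}.

Theorem lemma5 (L : nat) (hL : 0 < L) (hev : ~~ odd L)
  (g : {ffun 'I_L -> bool} -> {ffun 'I_L -> bool})
  (hg : forall x, inA x -> inA (g x)) :
  exists (m n : nat) (f : network L n) (c : 'I_L -> 'I_n),
    0 < m /\ injective c /\
    (forall (u : nat -> inVar L -> bool) (x : nat -> 'I_n -> bool),
       trajectory f u x ->
       forall t, inA (a_at u t) ->
         (d_at u t = (false, true) -> c_at c x (t + m) = a_at u t) /\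
         (d_at u t = (true, false) -> c_at c x (t + m) = g (a_at u t))) /\
    cooperative f /\
    (forall v, indeg f v <= 2 /\ outdeg f v <= 2) /\
    (forall k : 'I_L, outdeg f (inr (c k)) = 0).
(* The network computes the DNF whose terms are the admissible patterns A labelled by
   the wanted output, which by the antichain property is the wanted output itself. *)
Proof.
pose label i (A : {set inVar L}) := if ctrl1 \in A then g (data_of A) i else data_of A i.
have [m [n [f [c [m_gt0 [inj_c [out [coop [deg sink]]]]]]]]] :=
  monotone_dnf_network (fun i A => admissible A && label i A).
exists m, n, f, c; split=> //; split=> //; split; last by [].
move=> u x traj t bal; set B := [set v | u t v].
have dataB : data_of B = a_at u t by apply/ffunP => j; rewrite !ffunE inE.
have outB i : ctrl1 \in B != (ctrl2 \in B) -> c_at c x (t + m) i = label i B.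
  move=> one; rewrite ffunE (out u x traj).
  rewrite (antichain_extension (label i) (@admissible_antichain L)) //.
  by rewrite /admissible dataB bal.
rewrite /d_at; split=> -[d1 d2]; apply/ffunP => i.
  by rewrite outB /label !inE ?d1 ?d2 ?dataB // ffunE.
by rewrite outB /label !inE ?d1 ?d2 ?dataB.
Qed.
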